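(* Let $n=2^bc$ with $c>1$ odd and $b>1$. Let $D_n=\langle s_1,t_1\mid s_1^2=t_1^{n/2}=1,\ s_1t_1s_1=t_1^{-1}\rangle$ and $D_{2n}=\langle s_2,t_2\mid s_2^2=t_2^n=1,\ s_2t_2s_2=t_2^{-1}\rangle$. Let $(u_i)_{i\in[1,m]}$ be a system of equations over $D_n$, each $u_i$ a word over constants $s_1,t_1,t_1^{-1}$ and variables $X_1^{\pm1},\dots,X_k^{\pm1}$. Let $w_i$ be obtained from $u_i$ by replacing $s_1\mapsto a$, $t_1^{\pm1}\mapsto d^{\pm2}$, each $X_j$ by $g_{0,j}(g_{1,j}dg_{1,j}^{-1})\cdots(g_{n/2,j}dg_{n/2,j}^{-1})$ and each $X_j^{-1}$ by the formal inverse of that word. Let $G_{4c}$ be the group with generators $a,d$ and $g_{i,j}$ ($i\in[0,n/2]$, $j\in[1,k]$) and relators $a^2$, $d^n$, $adad$, $[g,g']$, $[g,a]$, $g^2$, $[[\cdots[[d^c,g],g],\cdots],g]$ (with $b$ occurrences of $g$) for all $g,g'\in\{g_{i,j}\}$, and $w_i$ for $i\in[1,m]$. Then there is a surjective homomorphism $G_{4c}\to D_{2n}$ if and only if the system $(u_i)_{i\in[1,m]}$ has a solution in $D_n$.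
   Context: A solution of a system of equations over a group is an assignment of group elements $h_j$ to the variables $X_j$ (and $h_j^{-1}$ to $X_j^{-1}$) under which every equation evaluates to the identity. $[x,y]=xyx^{-1}y^{-1}$. *)

From HB Require Import structures.
From mathcomp Require Import all_boot all_order all_algebra all_fingroup.
Set Implicit Arguments. Unset Strict Implicit. Unset Printing Implicit Defensive.
Import GRing.Theory.

(* ---------- Concrete dihedral groups ----------
   Dih m is the dihedral group of order 2m, realised as the group of
   permutations of 'Z_m generated by the rotation x |-> x+1 (order m) and
   the reflection x |-> -x (order 2).  For m >= 3 this is a faithful model of
   < s, t | s^2 = t^m = 1, s t s = t^-1 >.  (Only used with m >= 6.) *)
Definition rotZ (m : nat) : {perm 'Z_m} := perm (@addrI _ (1%R : 'Z_m)).
Definition reflZ (m : nat) : {perm 'Z_m} := perm (@oppr_inj 'Z_m).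

Local Open Scope group_scope.

Definition Dih (m : nat) : {set {perm 'Z_m}} := << [set rotZ m; reflZ m] >>.

Definition comm (gT : finGroupType) (x y : gT) : gT := x * y * x^-1 * y^-1.

Definition itcomm (gT : finGroupType) (x g : gT) (b : nat) : gT :=
  iter b (fun z => comm z g) x.

Inductive ulet (k : nat) : Type :=
| US | UT | UTi | UX of 'I_k & bool.
Arguments US {k}. Arguments UT {k}. Arguments UTi {k}.

Definition uval (gT : finGroupType) (k : nat) (s t : gT) (h : 'I_k -> gT)
  (l : ulet k) : gT :=
  match l with
  | US => s | UT => t | UTi => t^-1
  | UX j e => if e then (h j)^-1 else h j
  end.

Definition ueval (gT : finGroupType) (k : nat) (s t : gT) (h : 'I_k -> gT)
  (w : seq (ulet k)) : gT := foldr (fun l x => uval s t h l * x) 1 w.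

(* A solution of the system us in D_n (n = 2 * half), with s1 = reflection,
   t1 = rotation (of order half = n/2). *)
Definition has_solution_Dn (half k : nat) (us : seq (seq (ulet k))) : Prop :=
  exists h : 'I_k -> {perm 'Z_half},
    (forall j, h j \in Dih half) /\
    (forall i, (i < size us)%N -> ueval (reflZ half) (rotZ half) h (nth [::] us i) = 1).

Inductive glet (half k : nat) : Type :=
| GA of bool | GD of bool | GG of 'I_half.+1 & 'I_k & bool.

Definition ginv half k (l : glet half k) : glet half k :=
  match l with
  | GA e => GA _ _ (~~ e) | GD e => GD _ _ (~~ e) | GG i j e => GG i j (~~ e)
  end.

Definition winv half k (w : seq (glet half k)) := rev (map (@ginv half k) w).

Definition Xword half k (j : 'I_k) : seq (glet half k) :=
  GG ord0 j false ::
  flatten [seq [:: GG (inord i) j false; GD _ _ false; GG (inord i) j true]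
          | i <- iota 1 half].

Definition subst_let half k (l : ulet k) : seq (glet half k) :=
  match l with
  | US => [:: GA _ _ false]
  | UT => [:: GD _ _ false; GD _ _ false]
  | UTi => [:: GD _ _ true; GD _ _ true]
  | UX j false => Xword half j
  | UX j true => winv (Xword half j)
  end.

Definition wsubst half k (u : seq (ulet k)) : seq (glet half k) :=
  flatten (map (@subst_let half k) u).

Definition gval (gT : finGroupType) half k (A D : gT)
  (G : 'I_half.+1 -> 'I_k -> gT) (l : glet half k) : gT :=
  match l with
  | GA e => if e then A^-1 else A
  | GD e => if e then D^-1 else D
  | GG i j e => if e then (G i j)^-1 else G i j
  end.

Definition geval (gT : finGroupType) half k (A D : gT)
  (G : 'I_half.+1 -> 'I_k -> gT) (w : seq (glet half k)) : gT :=
  foldr (fun l x => gval A D G l * x) 1 w.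

(* The assignment a |-> A, d |-> D, g_{i,j} |-> G i j into D_{2n} = Dih n
   kills all relators of G_{4c}, i.e. defines a homomorphism G_{4c} -> D_{2n}
   (von Dyck), and this homomorphism is surjective, i.e. the images of the
   generators generate D_{2n}. *)
Definition G4c_surj_hom (n b c k : nat) (us : seq (seq (ulet k)))
  (A D : {perm 'Z_n}) (G : 'I_(n./2).+1 -> 'I_k -> {perm 'Z_n}) : Prop :=
  [/\ [/\ A \in Dih n, D \in Dih n & (forall i j, G i j \in Dih n)],
      [/\ A ^+ 2 = 1, D ^+ n = 1 & A * D * A * D = 1],
      (forall i j i' j',
         [/\ comm (G i j) (G i' j') = 1, comm (G i j) A = 1,
             (G i j) ^+ 2 = 1 & itcomm (D ^+ c) (G i j) b = 1]),
      (forall l, (l < size us)%N -> geval A D G (wsubst (n./2) (nth [::] us l)) = 1)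
    & << [set A; D] :|: [set G i j | i : 'I_(n./2).+1, j : 'I_k] >> = Dih n].

From mathcomp Require Import all_boot all_order all_algebra all_fingroup.
From mathcomp Require Import zify ring.

(* Realise D_m as the group of affine maps z |-> +-z + k of Z/m, i.e. as the quotient of the
   infinite dihedral group of pairs (e, k).
   Given a solution h of the system in D_{n/2}, send a and d to the reflection and the rotation
   of Z/n, and every g_{i,j} to the identity or to the reflection through 0.  Choosing which of
   g_{1,j}, ..., g_{n/2,j} are reflections makes the product of the conjugates of d in X_j any
   even power of d, in particular d^{2k} when h_j is z |-> +-z + k.  The relators then hold, and
   each w_i is the image of u_i(h) under the embedding D_{n/2} -> D_n, (e, k) |-> (e, 2k).
   Conversely, let a surjection map a, d, g_{i,j} to A, D, G_{i,j}.  If A were a rotation, then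
   either D is a reflection and, modulo c, every generator is trivial or one fixed reflection
   (the iterated commutator relator gives this for the reflections G_{i,j}), or D is a rotation
   and all generators commute; both contradict generation.  So A is the reflection z |-> q - z,
   D is a rotation z |-> z + m (otherwise A would be central), and m is prime to n/2 by the same
   argument modulo gcd(m, n/2).  As the G_{i,j} commute with A, every X_j lies in the image of
   the embedding (e, r) |-> (e, 2mr + [e]q) of D_{n/2}, which sends s_1, t_1 to A, D^2, so the
   equations w_i = 1 pull back to a solution. *)

Set Implicit Arguments. Unset Strict Implicit. Unset Printing Implicit Defensive.
Import Order.TTheory GRing.Theory Num.Theory.

Local Open Scope ring_scope.
Local Open Scope group_scope.

Lemma intr_Zp_eq0 (m : nat) (k : int) : (1 < m)%N -> ((k%:~R : 'Z_m) == 0) = (m %| k)%Z.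
Proof.
move=> m_gt1; have natr_eq0 a : ((a%:R : 'Z_m) == 0) = (m %| a)%N.
  by rewrite -val_eqE /= val_Zp_nat.
by case: k => a; rewrite ?NegzE ?intrN ?oppr_eq0 -pmulrn natr_eq0 dvdzE ?abszN.
Qed.

(* The pair (e, k) stands for z |-> -z + k if e and z |-> z + k otherwise; [dih_mul x y] is
   "first x, then y", matching the product of permutations. *)
Definition dih_mul (x y : bool * int) : bool * int :=
  (x.1 (+) y.1, (if y.1 then - x.2 else x.2) + y.2).

Definition dih_inv (x : bool * int) : bool * int := (x.1, if x.1 then x.2 else - x.2).

Definition refl_shift (e : bool) (q : int) : int := if e then q else 0.

Section AffineMaps.
Variable m : nat.

Definition aff_fun (x : bool * int) (z : 'Z_m) : 'Z_m := (if x.1 then - z else z) + x.2%:~R.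

Lemma aff_fun_inj x : injective (aff_fun x).
Proof. by move=> z z' /addIr; case: x.1 => // /oppr_inj. Qed.

Definition aff x : {perm 'Z_m} := perm (@aff_fun_inj x).

Lemma affE x z : aff x z = (if x.1 then - z else z) + x.2%:~R.
Proof. by rewrite permE. Qed.

Lemma affM x y : aff x * aff y = aff (dih_mul x y).
Proof.
apply/permP => z; rewrite permM !affE intrD.
by case: x y => [[] a] [[] b]; rewrite /= ?intrN ?opprD ?opprK ?addrA.
Qed.

Lemma aff1 : aff (false, 0%R) = 1.
Proof. by apply/permP => z; rewrite affE perm1 addr0. Qed.

Lemma affV x : (aff x)^-1 = aff (dih_inv x).
Proof.
apply/eqP; rewrite eq_invg_mul affM -aff1 /dih_mul /dih_inv /= addbb.
by case: x.1; rewrite ?subrr // addNr.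
Qed.

Lemma aff_rotX r j : aff (false, r) ^+ j = aff (false, r * j%:Z)%R.
Proof.
elim: j => [|j IHj]; first by rewrite mulr0 aff1.
by rewrite expgS IHj affM /= intS mulrDr mulr1.
Qed.

Hypothesis m_gt2 : (2 < m)%N.

Lemma aff_eqE x y : (aff x == aff y) = (x.1 == y.1) && (m %| x.2 - y.2)%Z.
Proof.
have m_gt1 : (1 < m)%N by apply: ltnW.
have two_neq0 : (1 + 1 : 'Z_m) != 0.
  rewrite -[1 + 1]/((2%:Z)%:~R) intr_Zp_eq0 // dvdzE /=.
  by apply: contraTN m_gt2 => /(dvdn_leq (ltn0Sn 1)); rewrite -leqNgt.
apply/eqP/andP => [exy | [/eqP e12 m_dvd]]; last first.
  apply/permP => z; rewrite !affE e12; congr (_ + _); apply/eqP.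
  by rewrite -subr_eq0 -intrB intr_Zp_eq0.
have ex0 := congr1 (fun p : {perm 'Z_m} => p 0) exy.
have ex1 := congr1 (fun p : {perm 'Z_m} => p 1%R) exy.
rewrite /= !affE oppr0 !if_same !add0r in ex0.
rewrite /= !affE ex0 in ex1; move/addIr: ex1 => ex1.
split; last by rewrite -intr_Zp_eq0 // intrB ex0 subrr.
case: x.1 y.1 ex1 => [] [] // ex1; case/eqP: two_neq0.
  by rewrite -[X in X + _]ex1 addNr.
by rewrite [X in _ + X]ex1 addrN.
Qed.

Lemma aff_eq1 x : (aff x == 1) = ~~ x.1 && (m %| x.2)%Z.
Proof. by rewrite -aff1 aff_eqE subr0 eqbF_neg. Qed.

End AffineMaps.

Lemma rotZE m : rotZ m = aff m (false, 1%R).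
Proof. by apply/permP => z; rewrite affE permE addrC. Qed.

Lemma reflZE m : reflZ m = aff m (true, 0%R).
Proof. by apply/permP => z; rewrite affE permE addr0. Qed.

Lemma gen_ind (gT : finGroupType) (S : {set gT}) (P : gT -> Prop) :
  P 1 -> (forall x y, P x -> P y -> P (x * y)) -> (forall x, x \in S -> P x) ->
  forall x, x \in <<S>> -> P x.
Proof.
move=> P1 PM PS x /gen_prodgP [l [f fS ->]].
by apply: (big_ind P) => // i _; apply: PS.
Qed.

Lemma comm_eq1 (gT : finGroupType) (x y : gT) : comm x y = 1 <-> commute x y.
Proof.
rewrite /comm; split => [/eqP|cxy]; last by rewrite cxy mulgK mulgV.
by rewrite -eq_mulgV1 => /eqP xyx; rewrite /commute -{2}xyx mulgKV.
Qed.

Lemma commute_involutions (gT : finGroupType) (x y : gT) :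
  x ^+ 2 = 1 -> y ^+ 2 = 1 -> x * y * x * y = 1 -> commute x y.
Proof.
have invE (z : gT) : z ^+ 2 = 1 -> z^-1 = z by move=> z2; apply/eqP; rewrite eq_invg_mul -expg2 z2.
move=> /invE xV /invE yV /eqP; rewrite -mulgA -eq_invg_mul invMg xV yV => /eqP.
by rewrite /commute => <-.
Qed.

Lemma itcomm1 (gT : finGroupType) (x : gT) j : itcomm x 1 j.+1 = 1.
Proof. by rewrite /itcomm iterS; apply/comm_eq1/commute1. Qed.

Lemma Dih_aff m p : p \in Dih m -> exists x, p = aff m x.
Proof.
apply: (@gen_ind _ _ (fun p => exists x, p = aff m x)) => [|_ _ [x ->] [y ->]|q].
- by exists (false, 0%R); rewrite aff1.
- by exists (dih_mul x y); rewrite affM.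
rewrite !inE => /orP[] /eqP ->.
  by exists (false, 1%R); rewrite rotZE.
by exists (true, 0%R); rewrite reflZE.
Qed.

Lemma aff_Dih m x : aff m x \in Dih m.
Proof.
have rot_pow (a : nat) : aff m (false, Posz a) \in Dih m.
  by rewrite -[Posz a]mul1r -aff_rotX -rotZE groupX // mem_gen // !inE eqxx.
have -> : aff m x = aff m (x.1, 0%R) * aff m (false, x.2).
  by case: x => e k; rewrite affM /dih_mul /= addbF add0r.
apply: groupM.
  case: x.1; last by rewrite aff1 group1.
  by rewrite -reflZE mem_gen // !inE eqxx orbT.
case: x.2 => a; first exact: rot_pow.
have -> : aff m (false, Negz a) = (aff m (false, Posz a.+1))^-1 by rewrite affV NegzE.
by rewrite groupV rot_pow.
Qed.

Lemma Dih_gen_rot_refl m (S : {set {perm 'Z_m}}) :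
  rotZ m \in S -> reflZ m \in S -> S \subset Dih m -> <<S>> = Dih m.
Proof.
move=> rotS reflS S_Dih; apply/eqP; rewrite eqEsubset gen_subG S_Dih genS //.
by apply/subsetP => x; rewrite !inE => /orP[]/eqP->.
Qed.

Lemma refl_sq m q : aff m (true, q) ^+ 2 = 1.
Proof. by rewrite expg2 affM /dih_mul /= addrC subrr aff1. Qed.

Lemma refl_expg_odd m q j : odd j -> aff m (true, q) ^+ j = aff m (true, q).
Proof.
by move=> j_odd; rewrite -(odd_double_half j) j_odd -mul2n expgD expgM refl_sq expg1n mulg1.
Qed.

Lemma Dih_relators m : (2 < m)%N ->
  [/\ reflZ m ^+ 2 = 1, rotZ m ^+ m = 1 & reflZ m * rotZ m * reflZ m * rotZ m = 1].
Proof.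
move=> m_gt2; rewrite reflZE rotZE refl_sq aff_rotX !affM /dih_mul /= addr0 subrr aff1.
by split=> //; apply/eqP; rewrite aff_eq1 //= mul1r dvdzz.
Qed.

Lemma aff0_commute m e e' : commute (aff m (e, 0%R)) (aff m (e', 0%R)).
Proof. by rewrite /commute !affM /dih_mul /= addbC !oppr0 !if_same. Qed.

Lemma conj_rot m x r :
  aff m x * aff m (false, r) * (aff m x)^-1 = aff m (false, if x.1 then - r else r)%R.
Proof.
by rewrite affV !affM /dih_mul /dih_inv; case: x => [[] a]; congr (aff _ (_, _)) => /=; ring.
Qed.

Lemma prod_rot m (I : Type) (L : seq I) (f : I -> int) :
  \prod_(i <- L) aff m (false, f i) = aff m (false, \sum_(i <- L) f i)%R.
Proof.
apply: esym; apply: (big_morph (fun r => aff m (false, r))) => [r r'|]; last exact: aff1.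
by rewrite affM.
Qed.

Lemma prod_conj_rot m r (L : seq nat) (g : nat -> {perm 'Z_m}) : (forall i, g i \in Dih m) ->
  exists2 t : int, \prod_(i <- L) (g i * aff m (false, r) * (g i)^-1) = aff m (false, r * t)%R
    & (2 %| t - (size L)%:Z)%Z.
Proof.
move=> gD; elim: L => [|i L [t IHL t_par]].
  by exists 0%R; rewrite ?big_nil ?mulr0 ?aff1 // subrr dvdz0.
have [x gx] := Dih_aff (gD i).
exists ((if x.1 then -1 else 1) + t)%R.
  by rewrite big_cons IHL gx conj_rot affM /dih_mul /=; case: x.1; congr (aff _ (_, _)); ring.
have -> : ((if x.1 then -1 else 1) + t - (size (i :: L))%:Z =
    (if x.1 then - 2%:Z else 0) + (t - (size L)%:Z))%R.
  by rewrite /= intS; case: x.1; ring.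
by rewrite rpredD //; case: x.1; rewrite ?rpredN ?dvdzz ?dvdz0.
Qed.

Lemma itcomm_rot_refl m r q j :
  itcomm (aff m (false, r)) (aff m (true, q)) j = aff m (false, r * (2 ^ j)%:Z)%R.
Proof.
elim: j => [|j IHj]; first by rewrite /= mulr1.
rewrite /itcomm iterS -/(itcomm _ _ j) IHj /comm !affV !affM /dih_mul /dih_inv /=.
by rewrite expnS PoszM; congr (aff _ (_, _)); ring.
Qed.

Lemma itcomm_refl_refl m r q j :
  itcomm (aff m (true, r)) (aff m (true, q)) j.+1 = aff m (false, (q - r) * (2 ^ j.+1)%:Z)%R.
Proof.
rewrite /itcomm iterSr {2}/comm !affV !affM /dih_mul /dih_inv /= -/(itcomm _ _ j).
by rewrite itcomm_rot_refl expnS PoszM; congr (aff _ (_, _)); ring.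
Qed.

Section DihedralFacts.
Variable n : nat.
Hypothesis n_gt2 : (2 < n)%N.

Lemma aff_commuteE x y :
  commute (aff n x) (aff n y) <-> (n %| (dih_mul x y).2 - (dih_mul y x).2)%Z.
Proof.
rewrite /commute !affM; split => [/eqP|nxy].
  by rewrite aff_eqE // => /andP[].
by apply/eqP; rewrite aff_eqE //= addbC eqxx.
Qed.

Lemma rot_refl_not_commute q : ~ commute (rotZ n) (aff n (true, q)).
Proof.
rewrite rotZE aff_commuteE /=; have -> : (-1 + q - (q + 1) = - 2%:Z)%R by ring.
by rewrite rpredN dvdzE /= => /(dvdn_leq (ltn0Sn 1)); rewrite leqNgt n_gt2.
Qed.

Lemma Dih_not_abelian : ~~ abelian (Dih n).
Proof.
apply/negP => /centsP Dih_ab; apply: (@rot_refl_not_commute 0).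
by apply: Dih_ab; rewrite ?rotZE; apply: aff_Dih.
Qed.

Lemma central_rot r y : (n %| r *+ 2)%Z -> commute (aff n (false, r)) (aff n y).
Proof.
move=> n_2r; apply/aff_commuteE; case: y => [[] k] /=.
  by rewrite -rpredN in n_2r; congr (_ %| _)%Z: n_2r; ring.
by rewrite (addrC k) subrr dvdz0.
Qed.

Lemma commute_refl_shift (H : nat) x q : n = H.*2 ->
  commute (aff n x) (aff n (true, q)) -> (H %| x.2 - refl_shift x.1 q)%Z.
Proof.
move=> nH /aff_commuteE; rewrite nH -muln2 PoszM.
have -> : ((dih_mul x (true, q)).2 - (dih_mul (true, q) x).2 =
    (x.2 - refl_shift x.1 q) * - 2%:Z)%R by case: x => [[] k] /=; ring.
by rewrite mulrN rpredN dvdz_mul2r.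
Qed.

(* p reduces modulo d to the identity or to the reflection z |-> q - z. *)
Definition mod_refl (d q : int) (p : {perm 'Z_n}) : Prop :=
  exists x, p = aff n x /\ (d %| x.2 - refl_shift x.1 q)%Z.

Lemma mod_refl1 d q : mod_refl d q 1.
Proof. by exists (false, 0%R); rewrite aff1 subrr dvdz0. Qed.

Lemma mod_reflM d q p p' : mod_refl d q p -> mod_refl d q p' -> mod_refl d q (p * p').
Proof.
move=> [x [-> dx]] [y [-> dy]]; exists (dih_mul x y); rewrite affM; split => //.
have -> : ((dih_mul x y).2 - refl_shift (dih_mul x y).1 q =
  (if y.1 then - (x.2 - refl_shift x.1 q) else x.2 - refl_shift x.1 q) +
  (y.2 - refl_shift y.1 q))%R.
  by case: x y {dx dy} => [[] a] [[] b] /=; ring.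
by rewrite rpredD //; case: ifP; rewrite ?rpredN.
Qed.

Lemma Dih_gen_mod_refl (d q : int) (S : {set {perm 'Z_n}}) : (d %| n%:Z)%Z -> <<S>> = Dih n ->
  (forall p, p \in S -> mod_refl d q p) -> (d %| 1)%Z.
Proof.
move=> d_n genS modS; have rot_in : rotZ n \in <<S>> by rewrite genS mem_gen // !inE eqxx.
have [x [rotx dx]] := gen_ind (mod_refl1 d q) (@mod_reflM d q) modS rot_in.
move/eqP: rotx; rewrite rotZE aff_eqE // => /andP[/eqP x1 n_x2].
rewrite -x1 /= subr0 in dx.
by have := dvdz_trans d_n n_x2; rewrite -(rpredDr _ dx) subrK.
Qed.

End DihedralFacts.

Section WordEvaluation.
Variables (gT : finGroupType) (half k : nat) (A D : gT) (G : 'I_half.+1 -> 'I_k -> gT).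

Lemma geval_cat w1 w2 : geval A D G (w1 ++ w2) = geval A D G w1 * geval A D G w2.
Proof. by elim: w1 => [|l w IHw] /=; rewrite ?mul1g // IHw mulgA. Qed.

Lemma geval_winv w : geval A D G (winv w) = (geval A D G w)^-1.
Proof.
elim: w => [|l w IHw]; first by rewrite invg1.
rewrite /winv /= rev_cons -cats1 geval_cat -/(winv w) IHw /= mulg1 invMg.
by case: l => [[]|[]|i j []] /=; rewrite ?invgK.
Qed.

Lemma geval_wsubst u :
  geval A D G (wsubst half u) = ueval A (D * D) (fun j => geval A D G (Xword half j)) u.
Proof.
elim: u => [|l u IHu] //=; rewrite geval_cat IHu; congr (_ * _).
by case: l => [|||j []] /=; rewrite ?geval_winv ?mulg1 ?invMg.
Qed.

Lemma geval_Xword j : geval A D G (Xword half j) =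
  G ord0 j * \prod_(i <- iota 1 half) (G (inord i) j * D * (G (inord i) j)^-1).
Proof.
rewrite /Xword /=; congr (_ * _); elim: (iota 1 half) => [|i L IHL]; first by rewrite big_nil.
by rewrite big_cons /= IHL !mulgA.
Qed.

End WordEvaluation.

Lemma eq_ueval (gT : finGroupType) k (s t : gT) (h h' : 'I_k -> gT) w :
  (forall j, h j = h' j) -> ueval s t h w = ueval s t h' w.
Proof.
move=> hh'; elim: w => [|l w IHw] //=; rewrite IHw.
by case: l => [|||j []] /=; rewrite ?hh'.
Qed.

Definition dih_letter k (s t : bool * int) (h : 'I_k -> bool * int) (l : ulet k) :=
  match l with
  | US => s | UT => t | UTi => dih_inv t
  | UX j e => if e then dih_inv (h j) else h j
  end.

Definition dih_eval k s t h (w : seq (ulet k)) : bool * int :=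
  foldr (fun l x => dih_mul (@dih_letter k s t h l) x) (false, 0%R) w.

Lemma ueval_aff m k s t (h : 'I_k -> bool * int) w :
  ueval (aff m s) (aff m t) (fun j => aff m (h j)) w = aff m (dih_eval s t h w).
Proof.
elim: w => [|l w IHw] /=; first by rewrite aff1.
by rewrite IHw -affM; case: l => [|||j []] /=; rewrite ?affV.
Qed.

(* The endomorphism of the infinite dihedral group fixing the orientation and sending the unit
   rotation to the rotation by mu and the reflection z |-> -z to the reflection z |-> q - z. *)
Definition dih_scale (mu q : int) (x : bool * int) : bool * int :=
  (x.1, mu * x.2 + refl_shift x.1 q)%R.

Lemma dih_eval_scale mu q k s t (h : 'I_k -> bool * int) w :
  dih_eval (dih_scale mu q s) (dih_scale mu q t) (fun j => dih_scale mu q (h j)) w =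
  dih_scale mu q (dih_eval s t h w).
Proof.
have scaleM x y : dih_mul (dih_scale mu q x) (dih_scale mu q y) = dih_scale mu q (dih_mul x y).
  by case: x y => [[] a] [[] b]; congr pair; rewrite /=; ring.
have scaleV x : dih_inv (dih_scale mu q x) = dih_scale mu q (dih_inv x).
  by case: x => [[] a]; congr pair; rewrite /=; ring.
elim: w => [|l w IHw] /=; first by rewrite /dih_scale /= mulr0 addr0.
by rewrite IHw -scaleM; case: l => [|||j []]; rewrite /= ?scaleV.
Qed.

Lemma aff_scale_eq1 n H m q x : n = H.*2 -> (2 < H)%N -> coprimez m H ->
  (aff n (dih_scale (m *+ 2) q x) == 1) = (aff H x == 1).
Proof.
move=> nH H_gt2 coMH; have n_gt2 : (2 < n)%N by rewrite nH -addnn ltn_addl.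
rewrite !aff_eq1 //; case: x => [[] a] //=; rewrite addr0 nH -muln2 PoszM.
have -> : (m *+ 2 * a = m * a * 2%:Z)%R by ring.
by rewrite dvdz_mul2r // Gauss_dvdzr // coprimez_sym.
Qed.

Lemma ueval_scale_eq1 n H m q k (h : 'I_k -> bool * int) u : n = H.*2 -> (2 < H)%N ->
  coprimez m H ->
  (ueval (aff n (true, q)) (aff n (false, m *+ 2)) (fun j => aff n (dih_scale (m *+ 2) q (h j))) u
    == 1) = (ueval (reflZ H) (rotZ H) (fun j => aff H (h j)) u == 1).
Proof.
move=> nH H_gt2 coMH.
have -> : aff n (true, q) = aff n (dih_scale (m *+ 2) q (true, 0%R)).
  by rewrite /dih_scale mulr0 add0r.
have -> : aff n (false, m *+ 2) = aff n (dih_scale (m *+ 2) q (false, 1%R)).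
  by rewrite /dih_scale mulr1 addr0.
by rewrite ueval_aff dih_eval_scale (aff_scale_eq1 _ _ nH) // reflZE rotZE ueval_aff.
Qed.

Lemma aff_scale_image n H m q x : n = H.*2 -> (2 < H)%N -> coprimez m H ->
  (2 %| x.2 - refl_shift x.1 q)%Z -> exists r, aff n x = aff n (dih_scale (m *+ 2) q (x.1, r)).
Proof.
move=> nH H_gt2 /coprimezP [[u v] /= uv] /dvdzP [j xj].
have n_gt2 : (2 < n)%N by rewrite nH -addnn ltn_addl.
exists (u * j)%R; apply/eqP; rewrite aff_eqE // eqxx nH -muln2 PoszM /=.
apply/dvdzP; exists (j * v)%R.
have -> : x.2 = (j * 2 + refl_shift x.1 q)%R by rewrite -xj subrK.
transitivity (j * 2 * (1 - u * m))%R; first ring.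
by rewrite -[in 1 - _]uv; ring.
Qed.

Lemma signed_count_eq_double (H : nat) (a : int) : (0 < H)%N -> ~~ odd H ->
  exists2 P : nat, (P <= H)%N & (H.*2 %| (P%:Z - (H - P)%:Z - a *+ 2)%R)%Z.
Proof.
move=> H_gt0 H_even; set r := (a + (H./2)%:Z)%R.
have r_ge0 : (0 <= r %% H)%Z by rewrite modz_ge0 // eqz_nat -lt0n.
have PH : (`|(r %% H)%Z| <= H)%N by rewrite -lez_nat gez0_abs // ltW // ltz_pmod.
exists `|(r %% H)%Z|%N => //; rewrite -subzn // gez0_abs //.
apply/dvdzP; exists (- (r %/ H)%Z)%R.
have -> : (r %% H)%Z = (r - (r %/ H)%Z * H)%R by rewrite {2}(divz_eq r H) addrC addKr.
have halfH : (H%:Z = (H./2)%:Z * 2)%R by rewrite -PoszM muln2 even_halfK.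
rewrite /r -muln2 PoszM; move: ((a + _) %/ H)%Z => Q.
by rewrite halfH; ring.
Qed.

Lemma geval_Xword_threshold n H k (A : {perm 'Z_n}) (G : 'I_H.+1 -> 'I_k -> {perm 'Z_n})
    j e (P : nat) : (P <= H)%N -> G ord0 j = aff n (e, 0%R) ->
  (forall i : 'I_H.+1, (0 < i)%N -> G i j = aff n ((P < i)%N, 0%R)) ->
  geval A (rotZ n) G (Xword H j) = aff n (e, P%:Z - (H - P)%:Z)%R.
Proof.
move=> PH G0 Gi; rewrite geval_Xword G0.
rewrite (eq_big_seq (fun i => aff n (false, if (P < i)%N then -1 else 1)%R)); last first.
  move=> i; rewrite mem_iota add1n ltnS => /andP[i_gt0 iH].
  by rewrite Gi inordK ?ltnS // rotZE conj_rot.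
rewrite prod_rot affM /dih_mul /= addbF add0r; congr (aff _ (_, _)).
have -> : iota 1 H = index_iota 1 H.+1 by rewrite /index_iota subn1.
rewrite (big_cat_nat _ (n := P.+1)) //=.
rewrite (eq_big_nat _ _ (F2 := fun=> 1%R)); last first.
  by move=> i /andP[_]; rewrite ltnS leqNgt => /negbTE ->.
rewrite [X in _ + X](eq_big_nat _ _ (F2 := fun=> (-1)%R)); last by move=> i /andP[-> _].
by rewrite !sumr_const_nat !subSS subn0 mulNrn !natz.
Qed.

Section DoubleDihedral.
Variables (n b c : nat).
Hypotheses (nE : n = (2 ^ b * c)%N) (c_gt1 : (1 < c)%N) (b_gt1 : (1 < b)%N).

Local Notation H := n./2.

Lemma halfE : H = (2 ^ b.-1 * c)%N.
Proof.
by rewrite nE; move: b_gt1; case: b => [|b'] // _; rewrite expnS -mulnA mul2n doubleK.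
Qed.

Lemma n_double : n = H.*2.
Proof. by rewrite halfE -mul2n mulnA -expnS prednK // ltnW. Qed.

Lemma half_gt2 : (2 < H)%N.
Proof.
rewrite halfE; move: b_gt1; case: b => [|[|b']] // _ /=.
by rewrite expnS -mulnA; have := expn_gt0 2 b'; nia.
Qed.

Lemma n_gt2 : (2 < n)%N.
Proof. by rewrite n_double -addnn ltn_addl // half_gt2. Qed.

Lemma half_even : ~~ odd H.
Proof. by rewrite halfE; move: b_gt1; case: b => [|[|b']] // _; rewrite expnS -mulnA oddM. Qed.

Lemma c_dvd_half : (c %| H)%N.
Proof. by rewrite halfE dvdn_mull. Qed.

Lemma aff0_relators e e' :
  [/\ comm (aff n (e, 0%R)) (aff n (e', 0%R)) = 1, comm (aff n (e, 0%R)) (reflZ n) = 1,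
      aff n (e, 0%R) ^+ 2 = 1 & itcomm (rotZ n ^+ c) (aff n (e, 0%R)) b = 1].
Proof.
rewrite reflZE; split; try exact/comm_eq1/aff0_commute.
  by case: e; rewrite ?refl_sq ?aff1 ?expg1n.
case: e; last by rewrite aff1; move: b_gt1; case: b => [|b'] // _; apply: itcomm1.
rewrite rotZE aff_rotX itcomm_rot_refl mul1r; apply/eqP; rewrite aff_eq1 ?n_gt2 //= nE.
by rewrite mulnC PoszM.
Qed.

Lemma surj_hom_of_solution k (us : seq (seq (ulet k))) :
  @has_solution_Dn H k us -> exists A D G, @G4c_surj_hom n b c k us A D G.
Proof.
case=> h [hD h_sol].
have [rh hE] : exists rh : 'I_k -> bool * int, forall j, h j = aff H (rh j).
  by apply: (@fin_all_exists _ (fun=> _) (fun j x => h j = aff H x)) => j; apply: Dih_aff.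
have [P PH Pcong] := @fin_all_exists2 _ (fun=> nat) _ _
  (fun j => signed_count_eq_double (rh j).2 (ltnW (ltnW half_gt2)) half_even).
(* g_{i,j} d g_{i,j}^-1 is d or d^-1 according as i <= P j or not. *)
pose G (i : 'I_H.+1) j := aff n (if i == ord0 then (rh j).1 else (P j < i)%N, 0%R).
have X_val j : geval (reflZ n) (rotZ n) G (Xword H j) = aff n (dih_scale (1 *+ 2) 0 (rh j)).
  rewrite (@geval_Xword_threshold n H k _ G j (rh j).1 (P j) (PH j)) //; last first.
    by move=> i i_gt0; rewrite /G -val_eqE /= eqn0Ngt i_gt0.
  apply/eqP; rewrite aff_eqE ?n_gt2 //= eqxx /refl_shift if_same addr0.
  by move: (Pcong j); rewrite -n_double mulr_natl.
exists (reflZ n), (rotZ n), G; split.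
- by split; rewrite ?reflZE ?rotZE => *; apply: aff_Dih.
- exact: Dih_relators n_gt2.
- by move=> i j i' j'; apply: aff0_relators.
- move=> l l_lt; rewrite geval_wsubst (eq_ueval _ _ _ X_val) reflZE rotZE affM /dih_mul /=.
  rewrite -[(false, _)]/(false, 1 *+ 2)%R.
  apply/eqP; rewrite (ueval_scale_eq1 _ _ _ n_double half_gt2) ?coprimezE ?coprime1n //.
  by rewrite -(eq_ueval _ _ _ hE) h_sol.
apply: Dih_gen_rot_refl; rewrite ?inE ?eqxx ?orbT //.
by apply/subsetP => x; rewrite !inE => /orP[/orP[]|/imset2P[i j _ _ ->]] => [/eqP->|/eqP->|];
  rewrite ?reflZE ?rotZE ?aff_Dih.
Qed.

Lemma rot_sq1_half r : aff n (false, r) ^+ 2 = 1 -> (H %| r)%Z.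
Proof.
rewrite expg2 affM => /eqP; rewrite aff_eq1 ?n_gt2 //= {1}n_double -muln2 PoszM.
by rewrite -[(r + r)%R]mulr2n -mulr_natr dvdz_mul2r.
Qed.

Section SurjectionToSolution.
Variables (k : nat) (us : seq (seq (ulet k))) (A D : {perm 'Z_n}).
Variable G : 'I_H.+1 -> 'I_k -> {perm 'Z_n}.
Hypothesis c_odd : odd c.
Hypotheses (A_Dih : A \in Dih n) (D_Dih : D \in Dih n) (G_Dih : forall i j, G i j \in Dih n).
Hypotheses (A_sq : A ^+ 2 = 1) (ADAD : A * D * A * D = 1).
Hypothesis G_rel : forall i j i' j', [/\ comm (G i j) (G i' j') = 1, comm (G i j) A = 1,
  G i j ^+ 2 = 1 & itcomm (D ^+ c) (G i j) b = 1].
Hypothesis w_rel : forall l, (l < size us)%N -> geval A D G (wsubst H (nth [::] us l)) = 1.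

Local Notation gens := ([set A; D] :|: [set G i j | i : 'I_H.+1, j : 'I_k]).

Hypothesis gen : <<gens>> = Dih n.

Lemma gensP (P : {perm 'Z_n} -> Prop) :
  P A -> P D -> (forall i j, P (G i j)) -> forall x, x \in gens -> P x.
Proof. by move=> PA PD PG x; rewrite !inE => /orP[/orP[]/eqP->|/imset2P[i j _ _ ->]]. Qed.

Lemma commute_gens_Dih z : commute z A -> commute z D -> (forall i j, commute z (G i j)) ->
  forall x, x \in Dih n -> commute z x.
Proof.
move=> zA zD zG x; rewrite -gen; apply: gen_ind; [exact: commute1 | exact: commuteM |].
exact: gensP.
Qed.

Lemma G_commute_A i j : commute (G i j) A.
Proof. by have [_ /comm_eq1] := G_rel i j i j. Qed.

(* Modulo c, every generator is trivial or the reflection z |-> m - z. *)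
Lemma no_rot_A_refl_D qA m : A = aff n (false, qA) -> D = aff n (true, m) -> False.
Proof.
move=> AE DE; have c_dvd_n : (c %| n%:Z)%Z by rewrite dvdzE /= nE dvdn_mull.
have half_dvd r : (H %| r)%Z -> (c %| r)%Z by apply: dvdz_trans; rewrite dvdzE c_dvd_half.
suff /(Dih_gen_mod_refl n_gt2 c_dvd_n gen) : forall p, p \in gens -> mod_refl c m p.
  by rewrite dvdz1 /= => /eqP c1; move: c_gt1; rewrite c1.
apply: gensP => [||i j].
- by exists (false, qA); rewrite AE /= subr0 half_dvd // rot_sq1_half -?AE.
- by exists (true, m); rewrite DE /= subrr dvdz0.
have [[e kk] GE] := Dih_aff (G_Dih i j); exists (e, kk); split => //=.
have [_ _ G_sq G_itcomm] := G_rel i j i j.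
case: e GE => GE /=; last by rewrite subr0 half_dvd // rot_sq1_half -?GE.
move: G_itcomm; rewrite GE DE refl_expg_odd //.
move: b_gt1 nE; case: b => [|b'] // _ nE'; rewrite itcomm_refl_refl => /eqP.
rewrite aff_eq1 ?n_gt2 //= nE' mulnC PoszM.
by rewrite dvdz_mul2r // eqz_nat expn_eq0.
Qed.

Lemma no_rot_A_rot_D qA m : A = aff n (false, qA) -> D = aff n (false, m) -> False.
Proof.
move=> AE DE; have A_half : (n %| qA *+ 2)%Z.
  by move/eqP: A_sq; rewrite AE expg2 affM aff_eq1 ?n_gt2 //= addr0.
have D_half : (n %| m *+ 2)%Z.
  move/eqP: ADAD; rewrite AE DE !affM aff_eq1 ?n_gt2 //= => n_ADAD.
  have -> : (m *+ 2 = qA + m + qA + m - qA *+ 2)%R by ring.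
  exact: rpredB.
have central r : (n %| r *+ 2)%Z -> forall y, y \in Dih n -> commute (aff n (false, r)) y.
  by move=> nr y /Dih_aff[x ->]; apply: central_rot n_gt2 _ _ nr.
case/negP: (Dih_not_abelian n_gt2); rewrite -gen abelian_gen.
apply/centsP => x xS y yS; have y_Dih : y \in Dih n by rewrite -gen mem_gen.
move: x xS; apply: (@gensP (fun x => commute x y)) => [||i j]; rewrite ?AE ?DE.
- exact: central.
- exact: central.
move: y yS {y_Dih}; apply: (@gensP (commute (G i j))) => [||i' j']; first exact: G_commute_A.
  by apply/commute_sym; rewrite DE; apply: central _ D_half _ (G_Dih i j).
by have [/comm_eq1] := G_rel i j i' j'.
Qed.

Lemma A_refl : exists qA, A = aff n (true, qA).
Proof.
have [[[] qA] AE] := Dih_aff A_Dih; first by exists qA.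
have [[[] m] DE] := Dih_aff D_Dih; first by case: (no_rot_A_refl_D AE DE).
by case: (no_rot_A_rot_D AE DE).
Qed.

Lemma D_rot : exists m, D = aff n (false, m).
Proof.
have [qA AE] := A_refl; have [[[] m] DE] := Dih_aff D_Dih; last by exists m.
have AD : commute A D by apply: commute_involutions; rewrite // DE refl_sq.
have : commute A (rotZ n).
  apply: commute_gens_Dih => // [i j|]; last by rewrite rotZE aff_Dih.
  exact/commute_sym/G_commute_A.
by rewrite AE => /commute_sym /rot_refl_not_commute; case; apply: n_gt2.
Qed.

Lemma coprime_D_half qA m : A = aff n (true, qA) -> D = aff n (false, m) -> coprimez m H.
Proof.
move=> AE DE; have half_n : (H %| n%:Z)%Z by rewrite dvdzE /= {2}n_double -mul2n dvdn_mull.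
have gcd_n := dvdz_trans (dvdz_gcdr m H) half_n.
suff : (gcdz m H %| 1)%Z by rewrite dvdz1.
apply: (Dih_gen_mod_refl (q := qA) n_gt2 gcd_n gen); apply: gensP => [||i j].
- by exists (true, qA); rewrite AE /= subrr dvdz0.
- by exists (false, m); rewrite DE /= subr0 dvdz_gcdl.
have [x GE] := Dih_aff (G_Dih i j); exists x; split => //.
apply: dvdz_trans (dvdz_gcdr m H) (commute_refl_shift n_gt2 n_double _).
by rewrite -GE -AE; apply: G_commute_A.
Qed.

Lemma Xword_scale_image qA m j : A = aff n (true, qA) -> D = aff n (false, m) ->
  coprimez m H -> exists r, geval A D G (Xword H j) = aff n (dih_scale (m *+ 2) qA r).
Proof.
move=> AE DE coMH; rewrite geval_Xword DE.
have [t -> t_par] := prod_conj_rot m (iota 1 H) (fun i => G_Dih (inord i) j).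
have [x G0] := Dih_aff (G_Dih ord0 j).
have x_shift : (H %| x.2 - refl_shift x.1 qA)%Z.
  by apply: (commute_refl_shift n_gt2 n_double); rewrite -G0 -AE; apply: G_commute_A.
have two_H : (2 %| H%:Z)%Z by rewrite dvdzE /= dvdn2 half_even.
have t_even : (2 %| t)%Z by rewrite -(rpredDr _ two_H) size_iota subrK in t_par.
rewrite G0 affM.
have [|r ->] := @aff_scale_image n H m qA (dih_mul x (false, m * t)%R) n_double half_gt2 coMH.
  by rewrite /dih_mul /= addbF addrAC rpredD ?dvdz_mull // (dvdz_trans two_H x_shift).
by eexists.
Qed.

Lemma solution_of_surj_hom : @has_solution_Dn H k us.
Proof.
have [qA AE] := A_refl; have [m DE] := D_rot; have coMH := coprime_D_half AE DE.
have [rx rxE] := @fin_all_exists _ (fun=> _) _ (fun j => Xword_scale_image j AE DE coMH).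
exists (fun j => aff H (rx j)); split => [j|l l_lt]; first exact: aff_Dih.
apply/eqP; rewrite -(@ueval_scale_eq1 n H m qA k rx _ n_double half_gt2 coMH).
by move: (w_rel l_lt); rewrite geval_wsubst (eq_ueval _ _ _ rxE) AE DE affM => ->.
Qed.

End SurjectionToSolution.
End DoubleDihedral.

Local Close Scope group_scope.
Local Close Scope ring_scope.

Theorem lemma7p18 (n b c k : nat) (us : seq (seq (ulet k))) :
  n = 2 ^ b * c -> odd c -> 1 < c -> 1 < b ->
  ((exists (A D : {perm 'Z_n}) (G : 'I_(n./2).+1 -> 'I_k -> {perm 'Z_n}),
      @G4c_surj_hom n b c k us A D G)
   <-> @has_solution_Dn (n./2) k us).
Proof.
move=> nE c_odd c_gt1 b_gt1; split; last exact: surj_hom_of_solution.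
case=> A [D [G [[A_Dih D_Dih G_Dih] [A_sq _ ADAD] G_rel w_rel gen]]].
exact: (solution_of_surj_hom nE c_gt1 b_gt1 c_odd A_Dih D_Dih G_Dih A_sq ADAD G_rel w_rel gen).
Qed.
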